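(* Let $|x_1\rangle,\dots,|x_n\rangle\in\mathbb{C}^d$ be such that (i) they are linearly independent over $\mathbb{R}$, and (ii) $\langle x_j|x_k\rangle\in\mathbb{R}$ for all $j,k=1,\dots,n$. Then $n\le d$.
   Context: $\langle x|y\rangle=\sum_ix_i^*y_i$ denotes the standard Hermitian inner product on $\mathbb{C}^d$. *)

From HB Require Import structures.
From mathcomp Require Import all_boot all_order all_algebra.
From mathcomp Require Import complex.
Set Implicit Arguments. Unset Strict Implicit. Unset Printing Implicit Defensive.
Import Order.TTheory GRing.Theory Num.Theory.
Local Open Scope ring_scope.

(* Vectors in C^d are modelled as functions 'I_d -> R[i], where R[i] is the
   complex numbers over a real closed field R (e.g. the reals). *)

Definition hinner (R : rcfType) (d : nat) (x y : 'I_d -> R[i]) : R[i] :=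
  \sum_(i < d) (x i)^* * y i.

Definition R_lin_indep (R : rcfType) (d n : nat) (x : 'I_n -> 'I_d -> R[i]) : Prop :=
  forall c : 'I_n -> R,
    (forall i : 'I_d, \sum_(j < n) (((c j)%:C)%C * x j i) = 0) ->
    forall j, c j = 0.

From mathcomp Require Import all_boot all_order all_algebra.
From mathcomp Require Import complex.
Import Order.TTheory GRing.Theory Num.Theory.
Set Implicit Arguments. Unset Strict Implicit. Unset Printing Implicit Defensive.
Local Open Scope ring_scope.

(* If sum_j (a_j + i b_j) x_j = 0 with a, b real, then u := sum_j a_j x_j and
   v := sum_j b_j x_j satisfy u = -i v, so <u|u> = -i <u|v>.  The Gram matrix
   being real, both sides are real, hence <u|u> = 0, so u = v = 0 and a = b = 0
   by real independence.  The family is thus independent over C, and a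
   C-independent family in C^d has at most d members. *)

Definition lin_indep (F : fieldType) (d n : nat) (x : 'I_n -> 'I_d -> F) :=
  forall c : 'I_n -> F,
    (forall i : 'I_d, \sum_(j < n) c j * x j i = 0) -> forall j, c j = 0.

Lemma lin_indep_leq (F : fieldType) (d n : nat) (x : 'I_n -> 'I_d -> F) :
  lin_indep x -> (n <= d)%N.
Proof.
move=> indep; pose X : 'M[F]_(n, d) := \matrix_(j, i) x j i.
suff /eqP <- : row_free X by rewrite rank_leq_col.
rewrite -kermx_eq0; apply/rowV0P => v /sub_kermxP vX0; apply/rowP => j.
rewrite mxE; apply: indep j => i.
have := congr1 (fun M : 'M_(1, d) => M 0 i) vX0; rewrite !mxE; apply: etrans.
by apply: eq_bigr => k _; rewrite mxE.
Qed.

Section RealGram.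
Variables (R : rcfType) (d : nat).
Implicit Types (u v : 'I_d -> R[i]) (r : R).

Lemma realC r : (r%:C)%C \is @Num.real R[i].
Proof. by apply/complex_realP; exists r. Qed.

Lemma hinner_self_eq0 u : hinner u u = 0 -> forall i, u i = 0.
Proof.
move=> /psumr_eq0P uu0 i; apply/eqP.
rewrite -normr_eq0 -sqrf_eq0 normCKC; apply/eqP/uu0 => // k _.
by rewrite -normCKC exprn_ge0.
Qed.

Lemma real_eq_mulCi_real (z w : R[i]) :
  z \is Num.real -> w \is Num.real -> z = 'i%C * w -> z = 0.
Proof.
move=> /complex_realP[r ->] /complex_realP[s ->] /(congr1 (@complex.Re R)) /=.
by rewrite mul0r mulr0 subrr => ->.
Qed.

Variable n : nat.
Implicit Types (x : 'I_n -> 'I_d -> R[i]) (a : 'I_n -> R).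

Definition rcomb x a : 'I_d -> R[i] :=
  fun i => \sum_(j < n) ((a j)%:C)%C * x j i.

Lemma hinner_rcombl x a v :
  hinner (rcomb x a) v = \sum_(j < n) ((a j)%:C)%C * hinner (x j) v.
Proof.
rewrite /hinner /rcomb.
under eq_bigr => i _ do rewrite rmorph_sum mulr_suml.
rewrite exchange_big /=; apply: eq_bigr => j _.
rewrite mulr_sumr; apply: eq_bigr => i _.
by rewrite rmorphM /= (conj_Creal (realC _)) mulrA.
Qed.

Lemma hinner_rcombr x a u :
  hinner u (rcomb x a) = \sum_(j < n) ((a j)%:C)%C * hinner u (x j).
Proof.
rewrite /hinner /rcomb.
under eq_bigr => i _ do rewrite mulr_sumr.
rewrite exchange_big /=; apply: eq_bigr => j _.
rewrite mulr_sumr; apply: eq_bigr => i _.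
by rewrite mulrCA.
Qed.

Lemma real_hinner_rcomb x a b :
  (forall j k, hinner (x j) (x k) \is Num.real) ->
  hinner (rcomb x a) (rcomb x b) \is Num.real.
Proof.
move=> gram_real; rewrite hinner_rcombl.
apply: rpred_sum => j _; apply: rpredM; first exact: realC.
rewrite hinner_rcombr; apply: rpred_sum => k _; apply: rpredM => //.
exact: realC.
Qed.

Lemma R_lin_indep_real_gram x :
  R_lin_indep x -> (forall j k, hinner (x j) (x k) \is Num.real) ->
  lin_indep x.
Proof.
move=> indep gram_real c c0.
pose a j := complex.Re (c j); pose b j := complex.Im (c j).
pose u := rcomb x a; pose v := rcomb x b.
have u_eq i : u i = - ('i%C * v i).
  apply/eqP; rewrite -addr_eq0 -(c0 i) /u /v /rcomb mulr_sumr -big_split.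
  by apply/eqP/eq_bigr => j _ /=; rewrite mulrA -mulrDl -complexE.
have uu : hinner u u = 'i%C * - hinner u v.
  rewrite /hinner -sumrN mulr_sumr; apply: eq_bigr => i _.
  by rewrite {2}u_eq !mulrN mulrCA.
have u0 : forall i, u i = 0.
  apply: hinner_self_eq0; apply: (real_eq_mulCi_real _ _ uu).
    exact: real_hinner_rcomb.
  by rewrite rpredN real_hinner_rcomb.
have v0 : forall i, v i = 0.
  move=> i; apply/eqP; have /eqP := u_eq i.
  rewrite u0 eq_sym oppr_eq0 mulf_eq0 => /orP[/eqP/(congr1 (@complex.Im R))|] //=.
  by move/eqP: (@oner_neq0 R).
move=> j; rewrite (complexE (c j)) -/(a j) -/(b j).
by rewrite (indep a u0) (indep b v0) mulr0 addr0.
Qed.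

End RealGram.

Theorem lemma4p2 (R : rcfType) (d n : nat) (x : 'I_n -> 'I_d -> R[i]) :
  R_lin_indep x ->
  (forall j k : 'I_n, hinner (x j) (x k) \is Num.real) ->
  (n <= d)%N.
Proof.
move=> indep gram_real.
exact: lin_indep_leq (R_lin_indep_real_gram indep gram_real).
Qed.
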